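(* Assume (QE) and (FS), and let $G$ be finite. Let $(K,\bar\sigma)\subseteq(K',\bar\sigma')$ be an extension of substructures with $G$-action such that the action of $G$ on $K$ is faithful and $\operatorname{dcl}(K)=K$. If $K^G$ is algebraically $K$-strongly PAC, then the extension $K^G\subseteq (K')^G$ is regular.
   Context: $L$ is a first-order language, $T$ a complete $L$-theory, $\mathfrak C$ a monster model; $\operatorname{acl}$, $\operatorname{dcl}$ computed in $\mathfrak C$; substructures are small $L$-substructures of $\mathfrak C$; forking is in the sense of $T$. (QE): $T$ has quantifier elimination. (FS): $T$ codes finite sets, i.e. every finite set of real tuples has a code which is a real tuple. For small $F\subseteq K$: $F\subseteq K$ is primary if $\operatorname{dcl}(K)\cap\operatorname{acl}(F)=\operatorname{dcl}(F)$, and regular if it is primary and $F=\operatorname{dcl}(F)$. For $F=\operatorname{dcl}(F)\subseteq K$: $F$ is algebraically $K$-strongly PAC if every algebraic $p\in S(F)$ which has a unique non-forking extension over $K$ is realized in $F$. $L_G=L\cup\{\sigma_g:g\in G\}$. A substructure with $G$-action is $(K,\bar\sigma)$ with $K$ a substructure of $\mathfrak C$, each $\sigma_g\in\operatorname{Aut}(K)$, $g\mapsto\sigma_g$ a homomorphism; an extension $(K,\bar\sigma)\subseteq(K',\bar\sigma')$ means $K\subseteq K'$ and $\sigma'_g|_K=\sigma_g$. Faithful: $g\ne h\Rightarrow\sigma_g\neq\sigma_h$. $K^G=\{a\in K:\sigma_g(a)=a\ \forall g\}$. *)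

From HB Require Import structures.
From mathcomp Require Import all_boot all_fingroup.
From Stdlib Require List.


Set Implicit Arguments.
Unset Strict Implicit.
Unset Printing Implicit Defensive.

Record lang := Lang {
  Func : Type; Rel : Type;
  farity : Func -> nat; rarity : Rel -> nat }.

Inductive term (L : lang) : Type :=
| Var : nat -> term L
| App : forall f : Func L, ('I_(farity f) -> term L) -> term L.

Inductive formula (L : lang) : Type :=
| FEq : term L -> term L -> formula L
| FRel : forall r : Rel L, ('I_(rarity r) -> term L) -> formula L
| FNeg : formula L -> formula L
| FAnd : formula L -> formula L -> formula L
| FEx : formula L -> formula L.   (* binds de Bruijn variable 0 *)

Fixpoint tbound L (k : nat) (t : term L) : Prop :=
  match t with
  | Var n => (n < k)%N
  | App f ts => forall i, tbound k (ts i)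
  end.

Fixpoint fbound L (k : nat) (phi : formula L) : Prop :=
  match phi with
  | FEq t u => tbound k t /\ tbound k u
  | FRel r ts => forall i, tbound k (ts i)
  | FNeg p => fbound k p
  | FAnd p q => fbound k p /\ fbound k q
  | FEx p => fbound k.+1 p
  end.

Fixpoint qfree L (phi : formula L) : Prop :=
  match phi with
  | FEq _ _ | FRel _ _ => True
  | FNeg p => qfree p
  | FAnd p q => qfree p /\ qfree q
  | FEx _ => False
  end.

(* L-structures are nonempty (pt is a witness). *)
Record structure (L : lang) := Structure {
  carrier :> Type;
  pt : carrier;
  interpF : forall f : Func L, ('I_(farity f) -> carrier) -> carrier;
  interpR : forall r : Rel L, ('I_(rarity r) -> carrier) -> Prop }.
Arguments interpF {L} s f _.
Arguments interpR {L} s r _.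
Arguments pt {L} s.

Section Semantics.
Variables (L : lang) (M : structure L).

Fixpoint teval (env : nat -> M) (t : term L) : M :=
  match t with
  | Var n => env n
  | App f ts => interpF M f (fun i => teval env (ts i))
  end.

Definition scons (a : M) (env : nat -> M) : nat -> M :=
  fun i => match i with 0 => a | S j => env j end.

Fixpoint sat (env : nat -> M) (phi : formula L) : Prop :=
  match phi with
  | FEq t u => teval env t = teval env u
  | FRel r ts => interpR M r (fun i => teval env (ts i))
  | FNeg p => ~ sat env p
  | FAnd p q => sat env p /\ sat env q
  | FEx p => exists a : M, sat (scons a env) p
  end.

Definition ext (n : nat) (a : 'I_n -> M) (e : nat -> M) : nat -> M :=
  fun i => if (insub i : option 'I_n) is Some j then a j else e (i - n).

(* An L(M)-formula in n free variables x_0..x_{n-1}: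
   phi(x, y) with parameters b substituted for y = (y_0..y_{m-1}). *)
Record lform (n : nat) := LForm {
  lf_phi : formula L;
  lf_m : nat;
  lf_par : 'I_lf_m -> M;
  lf_bound : fbound (n + lf_m) lf_phi }.
Arguments lf_phi {n} l.
Arguments lf_m {n} l.
Arguments lf_par {n} l _.
Arguments lf_bound {n} l.

Definition sat_par (n : nat) (phi : formula L) (m : nat) (b : 'I_m -> M)
  (a : 'I_n -> M) : Prop :=
  sat (ext a (ext b (fun _ => pt M))) phi.

Definition satL (n : nat) (a : 'I_n -> M) (psi : lform n) : Prop :=
  sat_par (lf_phi psi) (lf_par psi) a.

Definition lneg (n : nat) (psi : lform n) : lform n :=
  @LForm n (FNeg (lf_phi psi)) (lf_m psi) (lf_par psi) (lf_bound psi).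

Definition over (A : M -> Prop) (n : nat) (psi : lform n) : Prop :=
  forall j, A (lf_par psi j).

Definition subs (A B : M -> Prop) := forall x, A x -> B x.

Definition ltype (n : nat) := lform n -> Prop.

Definition realizes (n : nat) (p : ltype n) (a : 'I_n -> M) : Prop :=
  forall psi, p psi -> satL a psi.

Definition fin_sat (n : nat) (p : ltype n) : Prop :=
  forall l : seq (lform n), (forall psi, List.In psi l -> p psi) ->
    exists a : 'I_n -> M, forall psi, List.In psi l -> satL a psi.

Definition type_over (A : M -> Prop) (n : nat) (p : ltype n) : Prop :=
  forall psi, p psi -> over A psi.

Definition complete_type (A : M -> Prop) (n : nat) (p : ltype n) : Prop :=
  [/\ type_over A p, fin_sat p &
      forall psi : lform n, over A psi -> p psi \/ p (lneg psi)].

Definition same_types (n : nat) (p q : ltype n) : Prop :=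
  forall psi, p psi <-> q psi.

Definition algebraic_type (n : nat) (p : ltype n) : Prop :=
  exists s : seq ('I_n -> M), forall a, realizes p a -> List.In a s.

Definition realized_in (A : M -> Prop) (n : nat) (p : ltype n) : Prop :=
  exists a : 'I_n -> M, (forall i, A (a i)) /\ realizes p a.

Definition same_tp (A : M -> Prop) (m : nat) (b b' : 'I_m -> M) : Prop :=
  forall chi : lform m, over A chi -> (satL b chi <-> satL b' chi).

Definition dcl (A : M -> Prop) (x : M) : Prop :=
  exists psi : lform 1, over A psi /\
    forall a : 'I_1 -> M, satL a psi <-> a ord0 = x.

Definition acl (A : M -> Prop) (x : M) : Prop :=
  exists psi : lform 1, [/\ over A psi, satL (fun _ => x) psi &
    exists s : seq M, forall a : 'I_1 -> M, satL a psi -> List.In (a ord0) s].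

Definition divides (A : M -> Prop) (n : nat) (psi : lform n) : Prop :=
  exists (k : nat) (bs : nat -> 'I_(lf_m psi) -> M),
    (forall i, same_tp A (bs i) (lf_par psi)) /\
    forall l : seq nat, uniq l -> size l = k ->
      ~ exists a : 'I_n -> M, forall i, i \in l -> sat_par (lf_phi psi) (bs i) a.

Definition forks (A : M -> Prop) (n : nat) (p : ltype n) : Prop :=
  exists l : seq (lform n), (forall psi, List.In psi l -> divides A psi) /\
    forall a, realizes p a -> exists psi, List.In psi l /\ satL a psi.

Definition aut (s : M -> M) : Prop :=
  [/\ bijective s,
      forall f (a : 'I_(farity f) -> M), s (interpF M f a) = interpF M f (s \o a) &
      forall r (a : 'I_(rarity r) -> M), interpR M r a <-> interpR M r (s \o a)].

(* cardinality strictly below kappa, kappa represented by the type I *)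
Definition lt_kappa (I : Type) (T : Type) : Prop :=
  (exists f : T -> I, injective f) /\ ~ (exists g : I -> T, injective g).

Definition small (I : Type) (A : M -> Prop) : Prop := lt_kappa I {x | A x}.

Definition saturated (I : Type) : Prop :=
  forall (A : M -> Prop) (n : nat) (p : ltype n),
    small I A -> type_over A p -> fin_sat p -> exists a, realizes p a.

Definition strongly_homogeneous (I : Type) : Prop :=
  forall (A : M -> Prop) (f : M -> M), small I A ->
    (forall (phi : formula L) (env : nat -> M), (forall i, A (env i)) ->
        (sat env phi <-> sat (f \o env) phi)) ->
    exists s, aut s /\ forall x, A x -> s x = f x.

(* M is a monster model, with kappa > |L| + aleph_0 *)
Definition monster (I : Type) : Prop :=
  [/\ lt_kappa I nat, lt_kappa I (Func L), lt_kappa I (Rel L),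
      saturated I & strongly_homogeneous I].

Definition QE : Prop :=
  forall phi : formula L, exists psi : formula L,
    qfree psi /\ forall env, sat env phi <-> sat env psi.

(* (FS): every finite set of real tuples has a code which is a real tuple *)
Definition FS : Prop :=
  forall (n : nat) (S : seq ('I_n -> M)), exists (m : nat) (c : 'I_m -> M),
    forall s, aut s ->
      ((forall t, List.In t S -> List.In (s \o t) S) /\
       (forall t, List.In t S -> exists t', List.In t' S /\ s \o t' = t))
      <-> (forall j, s (c j) = c j).

Definition substructure (K : M -> Prop) : Prop :=
  forall f (a : 'I_(farity f) -> M), (forall i, K (a i)) -> K (interpF M f a).

Definition aut_on (K : M -> Prop) (s : M -> M) : Prop :=
  [/\ forall x, K x -> K (s x),
      forall y, K y -> exists x, K x /\ s x = y,
      forall x y, K x -> K y -> s x = s y -> x = y,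
      forall f (a : 'I_(farity f) -> M), (forall i, K (a i)) ->
        s (interpF M f a) = interpF M f (s \o a) &
      forall r (a : 'I_(rarity r) -> M), (forall i, K (a i)) ->
        (interpR M r a <-> interpR M r (s \o a))].

Definition G_action (gT : finGroupType) (K : M -> Prop) (sigma : gT -> M -> M) :=
  (forall g, aut_on K (sigma g)) /\
  (forall g h x, K x -> sigma (g * h)%g x = sigma g (sigma h x)).

Definition faithful (gT : finGroupType) (K : M -> Prop) (sigma : gT -> M -> M) :=
  forall g h : gT, g <> h -> exists x, K x /\ sigma g x <> sigma h x.

Definition fixed (gT : finGroupType) (K : M -> Prop) (sigma : gT -> M -> M) :
  M -> Prop := fun x => K x /\ forall g, sigma g x = x.

Definition dcl_closed (F : M -> Prop) : Prop := forall x, dcl F x <-> F x.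

Definition primary (F K : M -> Prop) : Prop :=
  forall x, (dcl K x /\ acl F x) <-> dcl F x.

Definition regular (F K : M -> Prop) : Prop := primary F K /\ dcl_closed F.

Definition alg_strongly_PAC (F K : M -> Prop) : Prop :=
  dcl_closed F /\
  forall (n : nat) (p : ltype n), complete_type F p -> algebraic_type p ->
    (exists q : ltype n, [/\ complete_type K q, (forall psi, p psi -> q psi),
        ~ forks F q &
        forall q' : ltype n, complete_type K q' -> (forall psi, p psi -> q' psi) ->
          ~ forks F q' -> same_types q q']) ->
    realized_in F p.

End Semantics.

(* Let x be in dcl(F') /\ acl(F).  Then p := tp(x/F) is algebraic
   and q := tp(x/K) does not fork over F (no formula satisfied by an element of
   acl(F) divides over F).  The heart of the argument is that q is the ONLY
   completion of p over K: if y realizes another completion, some automorphism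
   t of the monster fixes F and sends x to y; by Galois theory for F = K^G
   (which uses (FS) to code G-orbits of tuples of K), t agrees with some sigma_g
   on any finite tuple of K, and sigma'_g, extended to the monster using (QE)
   and homogeneity, fixes x because x is in dcl(F').  Hence tp(y/K) = tp(x/K).
   So p has a unique non-forking extension to K; the PAC hypothesis realizes p
   in F, and since p is the type of x over F this forces x in F = dcl(F). *)

From mathcomp Require Import all_boot fingroup zify.
From Stdlib Require Import Classical ClassicalEpsilon FunctionalExtensionality.

Set Implicit Arguments.
Unset Strict Implicit.
Unset Printing Implicit Defensive.

Definition xdec (P : Prop) : bool :=
  if excluded_middle_informative P then true else false.

Lemma xdecP (P : Prop) : reflect P (xdec P).
Proof. by rewrite /xdec; case: excluded_middle_informative => H; constructor. Qed.

Lemma sig_eq (T : Type) (P : T -> Prop) (w : T) (p1 p2 : P w) :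
  exist P w p1 = exist P w p2.
Proof. by rewrite (proof_irrelevance _ p1 p2). Qed.

Lemma in_seqP (T : eqType) (x : T) (s : seq T) : x \in s -> List.In x s.
Proof.
elim: s => [|y s IH] //=; rewrite inE => /orP [/eqP ->|/IH]; [by left|by right].
Qed.

Section Syntax.
Variables (L : lang) (M : structure L).

Fixpoint trename (r : nat -> nat) (t : term L) : term L :=
  match t with
  | Var n => Var L (r n)
  | App f ts => @App L f (fun i => trename r (ts i))
  end.

Definition upr (r : nat -> nat) : nat -> nat :=
  fun i => match i with 0 => 0 | S j => S (r j) end.

Fixpoint frename (r : nat -> nat) (phi : formula L) : formula L :=
  match phi with
  | FEq t u => FEq (trename r t) (trename r u)
  | FRel R ts => @FRel L R (fun i => trename r (ts i))
  | FNeg p => FNeg (frename r p)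
  | FAnd p q => FAnd (frename r p) (frename r q)
  | FEx p => FEx (frename (upr r) p)
  end.

Lemma teval_rename (env : nat -> M) r t :
  teval env (trename r t) = teval (env \o r) t.
Proof.
elim: t => [n|f ts IH] //=; congr (interpF _ f _).
by apply: functional_extensionality => i; exact: IH.
Qed.

Lemma sat_rename phi : forall r (env : nat -> M),
  sat env (frename r phi) <-> sat (env \o r) phi.
Proof.
elim: phi => [t u|R ts|p IH|p IHp q IHq|p IH] r env /=.
- by rewrite !teval_rename.
- suff -> : (fun i => teval env (trename r (ts i))) = (fun i => teval (env \o r) (ts i)) by [].
  by apply: functional_extensionality => i; rewrite teval_rename.
- by rewrite IH.
- by rewrite IHp IHq.
- have E a : scons a env \o upr r = scons a (env \o r).
    by apply: functional_extensionality => -[|j].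
  by split=> -[a Ha]; exists a; move: Ha; rewrite IH E.
Qed.

Lemma teval_agree k t (e1 e2 : nat -> M) :
  tbound k t -> (forall i, i < k -> e1 i = e2 i) -> teval e1 t = teval e2 t.
Proof.
elim: t => [n|f ts IH] /= Hb He; first exact: He.
by congr (interpF _ f _); apply: functional_extensionality => i; exact: IH.
Qed.

Lemma sat_agree phi : forall k (e1 e2 : nat -> M), fbound k phi ->
  (forall i, i < k -> e1 i = e2 i) -> (sat e1 phi <-> sat e2 phi).
Proof.
elim: phi => [t u|R ts|p IH|p IHp q IHq|p IH] k e1 e2 /= Hb He.
- by case: Hb => H1 H2; rewrite (teval_agree H1 He) (teval_agree H2 He).
- suff -> : (fun i => teval e1 (ts i)) = (fun i => teval e2 (ts i)) by [].
  by apply: functional_extensionality => i; exact: teval_agree (Hb i) He.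
- by rewrite (IH k e1 e2).
- by case: Hb => H1 H2; rewrite (IHp k e1 e2) // (IHq k e1 e2).
- split=> -[a Ha]; exists a; move: Ha; rewrite (IH k.+1 (scons a e1) (scons a e2)) //;
  by move=> [|i] //= /He.
Qed.

Lemma frename_bound (phi : formula L) : forall k k' r, fbound k phi ->
  (forall i, i < k -> r i < k') -> fbound k' (frename r phi).
Proof.
have tren k k' r (t : term L) :
    tbound k t -> (forall i, i < k -> r i < k') -> tbound k' (trename r t).
  by elim: t => [n|f ts IH] /= Hb Hr; [exact: Hr | move=> i; exact: IH].
elim: phi => [t u|R ts|p IH|p IHp q IHq|p IH] k k' r /= Hb Hr.
- by case: Hb => ??; split; apply: tren; eauto.
- by move=> i; apply: tren (Hb i) Hr.
- exact: IH Hb Hr.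
- by case: Hb => ??; split; [apply: IHp|apply: IHq]; eauto.
- by apply: (IH k.+1) => // -[|i] //= /Hr.
Qed.

Lemma tbound_mono k k' (t : term L) : tbound k t -> k <= k' -> tbound k' t.
Proof.
by elim: t => [n|f ts IH] /= Hb Hk; [exact: leq_trans Hb Hk | move=> i; exact: IH].
Qed.

Lemma fbound_mono (phi : formula L) : forall k k', fbound k phi -> k <= k' -> fbound k' phi.
Proof.
elim: phi => [t u|R ts|p IH|p IHp q IHq|p IH] k k' /= Hb Hk.
- by case: Hb => ??; split; apply: tbound_mono; eauto.
- by move=> i; apply: tbound_mono (Hb i) Hk.
- exact: IH Hb Hk.
- by case: Hb => ??; split; [apply: IHp|apply: IHq]; eauto.
- exact: (IH k.+1).
Qed.

Lemma fbound_ex (phi : formula L) : exists k, fbound k phi.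
Proof.
have tex (t : term L) : exists k, tbound k t.
  elim: t => [n|f ts IH] /=; first by exists n.+1.
  have [ks Hks] := fin_all_exists IH.
  by exists (\max_i ks i) => i; apply: tbound_mono (Hks i) _; exact: leq_bigmax.
elim: phi => [t u|R ts|p IH|p [k1 H1] q [k2 H2]|p [k H]] /=.
- have [k1 H1] := tex t; have [k2 H2] := tex u.
  by exists (maxn k1 k2); split; apply: tbound_mono; eauto; [exact: leq_maxl|exact: leq_maxr].
- have [ks Hks] := fin_all_exists (fun i => tex (ts i)).
  by exists (\max_i ks i) => i; apply: tbound_mono (Hks i) _; exact: leq_bigmax.
- exact: IH.
- by exists (maxn k1 k2); split; apply: fbound_mono; eauto; [exact: leq_maxl|exact: leq_maxr].
- by exists k; apply: fbound_mono H _; exact: leqnSn.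
Qed.

Lemma ext_lt n (a : 'I_n -> M) e i (H : i < n) : ext a e i = a (Ordinal H).
Proof. by rewrite /ext insubT. Qed.

Lemma ext_ge n (a : 'I_n -> M) e i : n <= i -> ext a e i = e (i - n).
Proof. by move=> H; rewrite /ext insubF // ltnNge H. Qed.

Lemma ext1_0 (a : M) e : ext (fun _ : 'I_1 => a) e 0 = a.
Proof. by rewrite (ext_lt _ _ (ltn0Sn 0)). Qed.

Lemma ext1_S (a : M) e j : ext (fun _ : 'I_1 => a) e j.+1 = e j.
Proof. by rewrite (ext_ge _ _ (ltn0Sn j)) subn1. Qed.

Lemma one_funE (a : 'I_1 -> M) : a = (fun _ => a ord0).
Proof. by apply: functional_extensionality => i; rewrite (ord1 i). Qed.

End Syntax.

Section Formulas.
Variables (L : lang) (M : structure L).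
Notation par psi := (@lf_par _ _ _ psi).

Lemma true_bound n : fbound (n + 0) (FEx (FEq (Var L 0) (Var L 0))).
Proof. by []. Qed.

Definition lf_true n : lform M n := LForm (fun _ : 'I_0 => pt M) (true_bound n).

Lemma satL_true n (a : 'I_n -> M) : satL a (lf_true n).
Proof. by exists (pt M). Qed.

(* In the conjunction the parameters of p2 are placed after those of p1, so the
   variables of phi2 are shifted by andr. *)
Definition andr n m1 (i : nat) := if i < n then i else i + m1.

Lemma and_bound n m1 m2 (phi1 phi2 : formula L) :
  fbound (n + m1) phi1 -> fbound (n + m2) phi2 ->
  fbound (n + (m1 + m2)) (FAnd phi1 (frename (andr n m1) phi2)).
Proof.
move=> H1 H2; split; first by apply: fbound_mono H1 _; rewrite leq_add2l leq_addr.
apply: frename_bound H2 _ => i Hi; rewrite /andr; case: ifP => Hin; lia.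
Qed.

Definition cat_par m1 m2 (b1 : 'I_m1 -> M) (b2 : 'I_m2 -> M) : 'I_(m1 + m2) -> M :=
  fun j => ext b1 (ext b2 (fun _ => pt M)) j.

Definition lf_and n (p1 p2 : lform M n) : lform M n :=
  LForm (cat_par (par p1) (par p2)) (and_bound (lf_bound p1) (lf_bound p2)).

Lemma cat_env_l n m1 m2 (a : 'I_n -> M) (b1 : 'I_m1 -> M) (b2 : 'I_m2 -> M) i :
  i < n + m1 ->
  ext a (ext (cat_par b1 b2) (fun _ => pt M)) i = ext a (ext b1 (fun _ => pt M)) i.
Proof.
move=> Hi; case: (ltnP i n) => Hin; first by rewrite !(ext_lt _ _ Hin).
rewrite !(ext_ge _ _ Hin); have H1 : i - n < m1 by rewrite ltn_subLR.
have H12 : i - n < m1 + m2 by exact: leq_trans H1 (leq_addr _ _).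
by rewrite (ext_lt _ _ H12) /cat_par /= !(ext_lt _ _ H1).
Qed.

Lemma cat_env_r n m1 m2 (a : 'I_n -> M) (b1 : 'I_m1 -> M) (b2 : 'I_m2 -> M) i :
  i < n + m2 ->
  ext a (ext (cat_par b1 b2) (fun _ => pt M)) (andr n m1 i)
  = ext a (ext b2 (fun _ => pt M)) i.
Proof.
move=> Hi; rewrite /andr; case: (ltnP i n) => Hin; first by rewrite !(ext_lt _ _ Hin).
have Hin' : n <= i + m1 by exact: leq_trans Hin (leq_addr _ _).
rewrite (ext_ge _ _ Hin') (ext_ge _ _ Hin); have H2 : i - n < m2 by rewrite ltn_subLR.
have E : i + m1 - n = m1 + (i - n) by rewrite addnC addnBA.
have H12 : i + m1 - n < m1 + m2 by rewrite E ltn_add2l.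
rewrite (ext_lt _ _ H12) /cat_par /= E (ext_ge _ _ (leq_addr _ _)) addKn.
by rewrite !(ext_lt _ _ H2).
Qed.

Lemma satL_and n (a : 'I_n -> M) (p1 p2 : lform M n) :
  satL a (lf_and p1 p2) <-> satL a p1 /\ satL a p2.
Proof.
rewrite /satL /sat_par /= sat_rename.
rewrite (sat_agree (e2 := ext a (ext (par p1) (fun _ => pt M))) (lf_bound p1)); last first.
  by move=> i Hi; rewrite cat_env_l.
rewrite (sat_agree (e2 := ext a (ext (par p2) (fun _ => pt M))) (lf_bound p2)) //.
by move=> i Hi /=; rewrite cat_env_r.
Qed.

Lemma over_and (A : M -> Prop) n (p1 p2 : lform M n) :
  over A p1 -> over A p2 -> over A (lf_and p1 p2).
Proof.
move=> H1 H2 j /=; rewrite /cat_par; case: (ltnP j (lf_m p1)) => Hj.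
  by rewrite (ext_lt _ _ Hj).
have H' : j - lf_m p1 < lf_m p2 by rewrite ltn_subLR.
by rewrite (ext_ge _ _ Hj) (ext_lt _ _ H').
Qed.

Definition lf_all n (l : seq (lform M n)) : lform M n :=
  foldr (@lf_and n) (lf_true n) l.

Lemma satL_all n (a : 'I_n -> M) l :
  satL a (lf_all l) <-> forall psi, List.In psi l -> satL a psi.
Proof.
elim: l => [|p l IH] /=; first by split=> // _; exact: satL_true.
rewrite satL_and IH; split; first by case=> H1 H2 psi [<-|/H2].
by move=> H; split; [apply: H; left | move=> psi Hp; apply: H; right].
Qed.

Lemma over_all (A : M -> Prop) n (l : seq (lform M n)) :
  (forall psi, List.In psi l -> over A psi) -> over A (lf_all l).
Proof.
elim: l => [|p l IH] /= H; first by case.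
by apply: over_and; [apply: H; left | apply: IH => psi Hp; apply: H; right].
Qed.

Lemma eqc_bound : fbound (1 + 1) (FEq (Var L 0) (Var L 1)).
Proof. by []. Qed.

Definition lf_eqc (c : M) : lform M 1 := LForm (fun _ : 'I_1 => c) eqc_bound.

Lemma satL_eqc c (a : 'I_1 -> M) : satL a (lf_eqc c) <-> a ord0 = c.
Proof.
rewrite /satL /sat_par /= (ext_lt _ _ (ltn0Sn 0)) (ext_ge _ _ (leqnn 1)) subnn.
by rewrite (ext_lt _ _ (ltn0Sn 0)) (_ : Ordinal _ = ord0) //; apply: val_inj.
Qed.

Lemma over_eqc (A : M -> Prop) c : A c -> over A (lf_eqc c).
Proof. by move=> H j. Qed.

End Formulas.

Section Automorphisms.
Variables (L : lang) (M : structure L).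
Notation par psi := (@lf_par _ _ _ psi).

Lemma aut_teval (s : M -> M) :
  (forall f (a : 'I_(farity f) -> M), s (interpF M f a) = interpF M f (s \o a)) ->
  forall (env : nat -> M) t, s (teval env t) = teval (s \o env) t.
Proof.
move=> Hf env; elim=> [n|f ts IH] //=; rewrite Hf; congr (interpF _ f _).
by apply: functional_extensionality => i /=; rewrite IH.
Qed.

Lemma aut_sat (s : M -> M) : aut s ->
  forall (phi : formula L) (env : nat -> M), sat env phi <-> sat (s \o env) phi.
Proof.
case=> [[g sg gs] Hf Hr]; elim=> [t u|R ts|p IH|p IHp q IHq|p IH] env /=.
- rewrite -!aut_teval //; split; [by move-> | by move/(can_inj sg)].
- rewrite Hr; suff -> : s \o (fun i => teval env (ts i)) = (fun i => teval (s \o env) (ts i)) by [].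
  by apply: functional_extensionality => i /=; rewrite aut_teval.
- by rewrite IH.
- by rewrite IHp IHq.
- have E a : s \o scons a env = scons (s a) (s \o env).
    by apply: functional_extensionality => -[|j].
  split=> -[a Ha]; first by exists (s a); rewrite -E -IH.
  by exists (g a); rewrite IH E gs.
Qed.

Lemma aut_inv (s g : M -> M) : aut s -> cancel s g -> cancel g s -> aut g.
Proof.
case=> [_ Hf Hr] sg gs; split; first by exists s.
- move=> f a; apply: (can_inj sg); rewrite gs Hf; congr (interpF _ f _).
  by apply: functional_extensionality => i /=; rewrite gs.
- move=> R a; rewrite (Hr R (g \o a)).
  by have -> : s \o (g \o a) = a by apply: functional_extensionality => i /=; rewrite gs.
Qed.

Lemma aut_satL (s : M -> M) n (a : 'I_n -> M) (psi : lform M n) : aut s ->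
  satL a psi <-> sat_par (lf_phi psi) (s \o par psi) (s \o a).
Proof.
move=> Hs; rewrite /satL /sat_par (aut_sat Hs).
apply: sat_agree (lf_bound psi) _ => i Hi /=.
case: (ltnP i n) => Hin; first by rewrite !ext_lt.
have Hm : i - n < lf_m psi by rewrite ltn_subLR.
by rewrite !(ext_ge _ _ Hin) !(ext_lt _ _ Hm).
Qed.

Lemma aut_fix_dcl (s : M -> M) (A : M -> Prop) x :
  aut s -> (forall y, A y -> s y = y) -> dcl A x -> s x = x.
Proof.
move=> Hs HA [psi [Ho Hd]]; apply/(Hd (s \o (fun _ => x))).
have E : s \o par psi = par psi.
  by apply: functional_extensionality => j /=; rewrite HA.
have Hx : satL (fun _ : 'I_1 => x) psi by apply/Hd.
by move: Hx; rewrite (aut_satL _ _ Hs) E.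
Qed.

Lemma sub_teval (K : M -> Prop) : substructure K ->
  forall (env : nat -> M) t, (forall i, K (env i)) -> K (teval env t).
Proof. by move=> HK env; elim=> [n|f ts IH] /= He; [exact: He | apply: HK => i; exact: IH]. Qed.

Lemma aut_on_qfree (K : M -> Prop) s : substructure K -> aut_on K s ->
  forall (phi : formula L) (env : nat -> M),
  qfree phi -> (forall i, K (env i)) -> sat env phi <-> sat (s \o env) phi.
Proof.
move=> HK [_ _ Hinj Hf Hr].
have Ht (env : nat -> M) t : (forall i, K (env i)) -> s (teval env t) = teval (s \o env) t.
  elim: t => [n|f ts IH] //= He; rewrite Hf; last by move=> i; exact: sub_teval.
  by congr (interpF _ f _); apply: functional_extensionality => i /=; exact: IH.
elim=> [t u|R ts|p IH|p IHp q IHq|p IH] env /= Hq He //.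
- rewrite -!Ht //; split; first by move->.
  by apply: Hinj; apply: sub_teval.
- rewrite Hr; last by move=> i; exact: sub_teval.
  suff -> : s \o (fun i => teval env (ts i)) = (fun i => teval (s \o env) (ts i)) by [].
  by apply: functional_extensionality => i /=; rewrite Ht.
- by rewrite IH.
- by case: Hq => ??; rewrite IHp // IHq.
Qed.

Lemma aut_on_extend (I : Type) (K : M -> Prop) s :
  monster M I -> QE M -> substructure K -> small I K -> aut_on K s ->
  exists r, aut r /\ forall x, K x -> r x = s x.
Proof.
move=> [_ _ _ _ Hh] Hqe HK Hsm Hs; apply: (Hh K s Hsm) => phi env He.
have [psi [Hq Heq]] := Hqe phi; rewrite !Heq; exact: (aut_on_qfree HK Hs Hq He).
Qed.

End Automorphisms.

Section Smallness.
Variable I : Type.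

Lemma inj_shift (e : nat -> I) :
  injective e -> exists h : I -> I, injective h /\ forall i, h i <> e 0.
Proof.
move=> He.
pose h i := match excluded_middle_informative (exists n, e n = i) with
  | left H => e (proj1_sig (constructive_indefinite_description _ H)).+1
  | right _ => i end.
exists h; split.
- move=> i j; rewrite /h.
  case: excluded_middle_informative => Hi; case: excluded_middle_informative => Hj.
  + case: constructive_indefinite_description => n /= Hn.
    case: constructive_indefinite_description => m /= Hm.
    by move/He => -[E]; rewrite -Hn -Hm E.
  + move=> E; case: Hj; move: E; case: constructive_indefinite_description => n /= Hn E.
    by exists n.+1.
  + move=> E; case: Hi; move: E; case: constructive_indefinite_description => n /= Hn E.
    by exists n.+1.
  + by [].
- move=> i; rewrite /h; case: excluded_middle_informative => Hi.
  + by case: constructive_indefinite_description => n /= Hn /He.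
  + by move=> E; apply: Hi; exists 0.
Qed.

(* Composing with a transposition, some injection of I into itself misses any
   given point. *)
Lemma inj_avoid (e : nat -> I) (i0 : I) :
  injective e -> exists h : I -> I, injective h /\ forall i, h i <> i0.
Proof.
move=> He; have [h [Hh Hne]] := inj_shift He.
pose sw x := if xdec (x = e 0) then i0 else if xdec (x = i0) then e 0 else x.
have swK : cancel sw sw.
  move=> x; rewrite /sw; case: (xdecP (x = e 0)) => H1.
  - case: (xdecP (i0 = e 0)) => H2; first by rewrite H1 H2.
    by rewrite (introT (xdecP _) (erefl i0)).
  - case: (xdecP (x = i0)) => H3; first by rewrite (introT (xdecP _) (erefl (e 0))).
    by rewrite (introF (xdecP _) H1) (introF (xdecP _) H3).
exists (sw \o h); split; first exact: inj_comp (can_inj swK) Hh.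
move=> i /= E; apply: (Hne i); apply: (can_inj swK).
by rewrite E /sw (introT (xdecP _) (erefl (e 0))).
Qed.

End Smallness.

Section SmallSets.
Variables (L : lang) (M : structure L) (I : Type).

(* Adding one element to a small set keeps it small (kappa is infinite). *)
Lemma small_add (A : M -> Prop) x :
  lt_kappa I nat -> small I A -> small I (fun z => A z \/ z = x).
Proof.
move=> [[e He] _] [[f Hf] Hn]; split.
- have [h [Hh Hne]] := inj_shift He.
  exists (fun w : {z | A z \/ z = x} =>
    match excluded_middle_informative (A (proj1_sig w)) with
    | left H => h (f (exist _ _ H)) | right _ => e 0 end).
  move=> [w1 p1] [w2 p2] /=.
  case: excluded_middle_informative => H1; case: excluded_middle_informative => H2.
  + by move/Hh/Hf => [E]; subst w2; exact: sig_eq.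
  + by move/Hne.
  + by move/esym/Hne.
  + by case: p1 => // E1; case: p2 => // E2; subst=> _; exact: sig_eq.
- move=> [g Hg]; apply: Hn.
  have [k [Hk Hx]] : exists k : I -> I, injective k /\ forall i, proj1_sig (g (k i)) <> x.
    case: (classic (exists i0, proj1_sig (g i0) = x)) => [[i0 Hi0]|Hno].
    + have [k [Hk Hk0]] := inj_avoid i0 He; exists k; split=> // i E; apply: (Hk0 i).
      apply: Hg; case: (g (k i)) E => [w1 p1]; case: (g i0) Hi0 => [w2 p2] /= E1 E2.
      by subst; exact: sig_eq.
    + by exists id; split=> // i E; apply: Hno; exists i.
  have HA i : A (proj1_sig (g (k i))) by case: (g (k i)) (Hx i) => [w [p|p]].
  exists (fun i => exist _ _ (HA i)) => i j [E]; apply: Hk; apply: Hg.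
  move: E; case: (g (k i)) => [w1 p1]; case: (g (k j)) => [w2 p2] /= E; subst.
  exact: sig_eq.
Qed.

Lemma small_sub (A B : M -> Prop) : small I A -> subs B A -> small I B.
Proof.
move=> [[f Hf] Hn] HBA; split.
- exists (fun w : {z | B z} => f (exist _ _ (HBA _ (proj2_sig w)))).
  by move=> [w1 p1] [w2 p2] /= /Hf [E]; subst; exact: sig_eq.
- move=> [g Hg]; apply: Hn; exists (fun i => exist _ _ (HBA _ (proj2_sig (g i)))).
  move=> i j [E]; apply: Hg; move: E; case: (g i) => [w1 p1]; case: (g j) => [w2 p2] /= E.
  by subst; exact: sig_eq.
Qed.

End SmallSets.

Section Types.
Variables (L : lang) (M : structure L) (I : Type).

Definition tp (A : M -> Prop) n (a : 'I_n -> M) : ltype M n :=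
  fun psi => over A psi /\ satL a psi.

Lemma tp_complete (A : M -> Prop) n (a : 'I_n -> M) : complete_type A (tp A a).
Proof.
split; [by move=> psi [] | by move=> l Hl; exists a => psi /Hl [] |].
by move=> psi Ho; case: (classic (satL a psi)) => H; [left|right].
Qed.

Lemma tp_mono (A B : M -> Prop) n (a : 'I_n -> M) psi :
  subs A B -> tp A a psi -> tp B a psi.
Proof. by move=> HAB [Ho Ha]; split=> // j; apply: HAB. Qed.

Lemma same_tp_of_tp (A : M -> Prop) n (a b : 'I_n -> M) :
  (forall chi, tp A a chi -> satL b chi) -> same_tp A a b.
Proof.
move=> Hab chi Ho; split=> [Ha|Hb]; first exact: Hab.
by apply: NNPP => Ha; exact: (Hab (lneg chi) (conj Ho Ha)).
Qed.

Lemma complete_type_realized (A : M -> Prop) n (q : ltype M n) b psi :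
  complete_type A q -> realizes q b -> over A psi -> satL b psi -> q psi.
Proof. by move=> [_ _ Hc] Hb Ho Hpsi; case: (Hc psi Ho) => // /Hb. Qed.

Lemma complete_type_incl (A : M -> Prop) n (q q' : ltype M n) :
  complete_type A q -> complete_type A q' -> (forall psi, q psi -> q' psi) ->
  same_types q q'.
Proof.
move=> [_ _ Hc] [Ho' Hf' _] Hqq' psi; split; first exact: Hqq'.
move=> Hq'; case: (Hc psi (Ho' _ Hq')) => // /Hqq' Hn.
have Hl phi : List.In phi [:: psi; lneg psi] -> q' phi by move=> [<-|[<-|[]]].
have [b Hb] := Hf' _ Hl.
by case: (Hb (lneg psi) (or_intror (or_introl erefl))); apply: Hb; left.
Qed.

(* A formula with parameters in A u {x}, read as a formula in the place of x,
   is an L(A)-formula in one variable. *)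
Lemma one_point_form (A : M -> Prop) x (phi : formula L) k (env : nat -> M) :
  fbound k phi -> (forall j, A (env j) \/ env j = x) ->
  exists chi : lform M 1, over A chi /\ forall z,
    satL (fun _ => z) chi <-> sat (fun j => if xdec (env j = x) then z else env j) phi.
Proof.
move=> Hb He; case: (classic (exists d, A d)) => [[d Hd]|Hno].
- pose r j := if xdec (env j = x) then 0 else j.+1.
  pose p : 'I_k -> M := fun j => if xdec (env j = x) then d else env j.
  have Hb' : fbound (1 + k) (frename r phi).
    by apply: frename_bound Hb _ => j Hj; rewrite /r; case: xdecP.
  exists (LForm p Hb'); split.
  + by move=> j /=; rewrite /p; case: xdecP => // H; case: (He j).
  + move=> z; rewrite /satL /sat_par /= sat_rename; apply: sat_agree Hb _ => j Hj /=.
    rewrite /r /p; case: xdecP => H; first by rewrite ext1_0.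
    by rewrite ext1_S (ext_lt _ _ Hj) /=; case: xdecP.
- have Hb' : fbound (1 + 0) (frename (fun _ => 0) phi) by apply: frename_bound Hb _.
  exists (LForm (fun _ : 'I_0 => pt M) Hb'); split; first by case.
  move=> z; rewrite /satL /sat_par /= sat_rename; apply: sat_agree Hb _ => j Hj /=.
  rewrite ext1_0; case: xdecP => // H.
  by case: (He j) => // HA; case: Hno; exists (env j).
Qed.

Lemma same_tp_conjugate (A : M -> Prop) x y : monster M I -> small I A ->
  same_tp A (fun _ : 'I_1 => x) (fun _ => y) ->
  exists t, [/\ aut t, (forall z, A z -> t z = z) & t x = y].
Proof.
move=> [Hn _ _ _ Hh] Hs Hxy.
have HAx : A x -> y = x.
  by move=> Ax; apply/(satL_eqc x (fun _ => y)); apply/(Hxy _ (over_eqc Ax)); apply/satL_eqc.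
pose f z := if xdec (z = x) then y else z.
have [s [Hs1 Hs2]] : exists s, aut s /\ forall z, (A z \/ z = x) -> s z = f z.
  apply: (Hh _ f (small_add x Hn Hs)) => phi env He.
  have [k Hk] := fbound_ex phi.
  have [chi [Hco Hchi]] := one_point_form Hk He.
  have -> : env = (fun j => if xdec (env j = x) then x else env j).
    by apply: functional_extensionality => j; case: xdecP.
  have -> : f \o (fun j => if xdec (env j = x) then x else env j)
          = (fun j => if xdec (env j = x) then y else env j).
    by apply: functional_extensionality => j; rewrite /f /=; do 2!case: xdecP.
  by rewrite -!Hchi Hxy.
exists s; split => //; last by rewrite Hs2 ?/f; [case: xdecP | right].
by move=> z Hz; rewrite Hs2 ?/f; [case: xdecP => // E; subst z; exact: HAx | left].
Qed.

Lemma tp_finite_conj (A : M -> Prop) n (a : 'I_n -> M) (l : seq (lform M n)) :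
  exists chi, tp A a chi /\
    forall b, satL b chi -> forall psi, List.In psi l -> tp A a psi -> satL b psi.
Proof.
pose l' := map (fun psi => if xdec (tp A a psi) then psi else lf_true M n) l.
exists (lf_all l'); split; [split|].
- by apply: over_all => _ /List.in_map_iff [q [<- _]]; case: xdecP => [[]|_] // [].
- by apply/satL_all => _ /List.in_map_iff [q [<- _]]; case: xdecP => [[]|_] //; exact: satL_true.
- move=> b /satL_all Hb psi Hin Hpsi; apply: Hb; apply/List.in_map_iff.
  by exists psi; split=> //; case: xdecP.
Qed.

Lemma not_dcl_conjugate (A : M -> Prop) x : monster M I -> small I A -> ~ dcl A x ->
  exists y, y <> x /\ same_tp A (fun _ : 'I_1 => x) (fun _ => y).
Proof.
move=> [Hn _ _ Hsat _] Hs Hnd.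
pose P : ltype M 1 := fun psi => tp A (fun _ => x) psi \/ psi = lneg (lf_eqc x).
have [y Hy] : exists y, realizes P y.
  apply: (Hsat _ 1 P (small_add x Hn Hs)).
    by move=> psi [[Ho _]|->] j; [left; exact: Ho | right].
  move=> l Hl; have [chi [[Ho Hx] Hchi]] := tp_finite_conj A (fun _ : 'I_1 => x) l.
  have [a [Ha Hax]] : exists a, satL a chi /\ a ord0 <> x.
    apply: NNPP => H; apply: Hnd; exists chi; split=> // a; split.
      by move=> Ha; apply: NNPP => Hax; apply: H; exists a.
    by move=> E; rewrite (one_funE a) E.
  exists a => psi Hpsi; case: (Hl psi Hpsi) => [Hp|->]; first exact: Hchi Ha psi Hpsi Hp.
  by move/satL_eqc.
exists (y ord0); split.
  by move=> E; apply: (Hy _ (or_intror erefl)); apply/satL_eqc.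
by rewrite -one_funE; apply: same_tp_of_tp => chi Hc; apply: Hy; left.
Qed.

Lemma dcl_of_invariant (A : M -> Prop) x : monster M I -> small I A ->
  (forall t, aut t -> (forall z, A z -> t z = z) -> t x = x) -> dcl A x.
Proof.
move=> Hm Hs Hinv; apply: NNPP => Hnd.
have [y [Hyx Hsame]] := not_dcl_conjugate Hm Hs Hnd.
have [t [Ht HtA Htx]] := same_tp_conjugate Hm Hs Hsame.
by apply: Hyx; rewrite -Htx; apply: Hinv.
Qed.

Lemma dcl_mono (A B : M -> Prop) x : subs A B -> dcl A x -> dcl B x.
Proof. by move=> HAB [psi [Ho Hd]]; exists psi; split=> // j; apply: HAB. Qed.

Lemma dcl_acl (A : M -> Prop) x : dcl A x -> acl A x.
Proof.
move=> [psi [Ho Hd]]; exists psi; split=> //; first by apply/Hd.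
by exists [:: x] => a /Hd ->; left.
Qed.

Lemma tp_realized_self (A : M -> Prop) x : realized_in A (tp A (fun _ : 'I_1 => x)) -> A x.
Proof.
move=> [a [HaA Ha]]; case: (classic (x = a ord0)) => [->|Hx] //.
have Hn : tp A (fun _ => x) (lneg (lf_eqc (a ord0))).
  by split; [exact: over_eqc | move/satL_eqc].
by case: (Ha _ Hn); apply/satL_eqc.
Qed.

End Types.

Definition permutes (L : lang) (M : structure L) m (s : M -> M) (S : seq ('I_m -> M)) :=
  (forall t, List.In t S -> List.In (s \o t) S) /\
  (forall t, List.In t S -> exists t', List.In t' S /\ s \o t' = t).

Section Galois.
Variables (L : lang) (M : structure L) (I : Type).
Variables (gT : finGroupType) (K : M -> Prop) (sigma : gT -> M -> M).
Hypotheses (Hmon : monster M I) (Hqe : QE M) (Hfs : FS M).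
Hypotheses (HK : substructure K) (HsK : small I K) (Hact : G_action K sigma).
Hypothesis HKdcl : dcl_closed K.

Lemma act_mem g x : K x -> K (sigma g x).
Proof. by case: Hact => Ha _; case: (Ha g) => H _ _ _ _; exact: H. Qed.

Lemma act1 x : K x -> sigma 1%g x = x.
Proof.
case: Hact => Ha Hm Kx; have := Hm 1%g 1%g x Kx; rewrite mulg1.
by case: (Ha 1%g) => [HK1 _ Hinj _ _] E; apply: esym; apply: Hinj => //; exact: HK1.
Qed.

Definition orbit m (kb : 'I_m -> M) : seq ('I_m -> M) :=
  map (fun g => fun j => sigma g (kb j)) (enum gT).

Lemma mem_orbit m (kb : 'I_m -> M) g : List.In (fun j => sigma g (kb j)) (orbit kb).
Proof. by apply: List.in_map; apply: in_seqP; rewrite mem_enum. Qed.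

Lemma orbit_permutes m (kb : 'I_m -> M) (s : M -> M) :
  (forall h, exists h', s \o (fun j => sigma h (kb j)) = (fun j => sigma h' (kb j))) ->
  (forall h, exists h', s \o (fun j => sigma h' (kb j)) = (fun j => sigma h (kb j))) ->
  permutes s (orbit kb).
Proof.
move=> H1 H2; split=> t0 /List.in_map_iff [h [<- _]]; first by have [h' ->] := H1 h; exact: mem_orbit.
by have [h' E] := H2 h; exists (fun j => sigma h' (kb j)); split=> //; exact: mem_orbit.
Qed.

(* A code of the orbit of a tuple of K lies in K^G: it is invariant under
   Aut(M/K), hence in dcl(K) = K, and each sigma_g permutes the orbit. *)
Lemma orbit_code_fixed m (kb : 'I_m -> M) mc (c : 'I_mc -> M) :
  (forall j, K (kb j)) ->
  (forall s, aut s -> permutes s (orbit kb) <-> forall j, s (c j) = c j) ->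
  forall j, fixed K sigma (c j).
Proof.
move=> Hkb Hc j; have HKc : K (c j).
  apply/HKdcl; apply: (dcl_of_invariant Hmon HsK) => s Hs HsK'; move: j; apply/(Hc s Hs).
  by apply: orbit_permutes => h; exists h; apply: functional_extensionality => j /=;
    rewrite HsK' //; exact: act_mem.
split=> // g; case: Hact => Ha Hmul.
have [r [Hr HrK]] := aut_on_extend Hmon Hqe HK HsK (Ha g).
rewrite -HrK //; move: j {HKc}; apply/(Hc r Hr); apply: orbit_permutes => h.
- exists (g * h)%g; apply: functional_extensionality => j /=.
  by rewrite HrK ?Hmul //; exact: act_mem.
- exists (g^-1 * h)%g; apply: functional_extensionality => j /=.
  by rewrite HrK; [rewrite -Hmul // mulKVg | exact: act_mem].
Qed.

Lemma galois_conjugate (t : M -> M) m (kb : 'I_m -> M) :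
  aut t -> (forall z, fixed K sigma z -> t z = z) -> (forall j, K (kb j)) ->
  exists g, forall j, t (kb j) = sigma g (kb j).
Proof.
move=> Ht Htf Hkb; have [mc [c Hc]] := Hfs (orbit kb).
have Hfc := orbit_code_fixed Hkb Hc.
have [Hp _] := (Hc t Ht).2 (fun j => Htf _ (Hfc j)).
have /List.in_map_iff [g [E _]] := Hp _ (mem_orbit kb 1%g).
by exists g => j; have := congr1 (fun f => f j) E => /= ->; rewrite act1.
Qed.

End Galois.

Section Algebraic.
Variables (L : lang) (M : structure L).
Notation par psi := (@lf_par _ _ _ psi).

Lemma inf_pigeon (f : nat -> M) (s : seq M) : forall (D : nat -> Prop),
  (forall n, exists i, n <= i /\ D i) -> (forall i, D i -> List.In (f i) s) ->
  exists y, forall n, exists i, [/\ n <= i, D i & f i = y].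
Proof.
elim: s => [|y s IH] D Hinf Hin; first by have [i [_ /Hin]] := Hinf 0.
case: (classic (forall n, exists i, [/\ n <= i, D i & f i = y])) => [H|H]; first by exists y.
have [n0 Hn0] := not_all_ex_not _ _ H.
have HD' n : exists i, n <= i /\ (D i /\ n0 <= i).
  have [i [Hi HD]] := Hinf (maxn n n0); exists i.
  by rewrite !(leq_trans _ Hi) ?leq_maxl ?leq_maxr.
have Hin' i : D i /\ n0 <= i -> List.In (f i) s.
  by move=> [HD Hi]; case: (Hin i HD) => // E; case: Hn0; exists i.
have [y' Hy'] := IH _ HD' Hin'.
by exists y' => n; have [i [H1 [H2 _] H3]] := Hy' n; exists i.
Qed.

Lemma inf_list (E : nat -> Prop) : (forall n, exists i, n <= i /\ E i) ->
  forall k, exists l : seq nat, [/\ uniq l, size l = k & forall i, i \in l -> E i].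
Proof.
move=> Hinf k.
suff [l [N [H1 H2 H3 _]]] : exists l : seq nat, exists N,
    [/\ uniq l, size l = k, forall i, i \in l -> E i & forall i, i \in l -> i < N].
  by exists l.
elim: k => [|k [l [N [H1 H2 H3 H4]]]]; first by exists [::], 0.
have [i [Hi HE]] := Hinf N; exists (i :: l), i.+1; split => /=.
- by rewrite H1 andbT; apply/negP => /H4; rewrite ltnNge Hi.
- by rewrite H2.
- by move=> j; rewrite inE => /orP [/eqP ->|/H3].
- by move=> j; rewrite inE => /orP [/eqP ->|/H4 Hj] //; exact: leq_trans Hj (leq_trans Hi _).
Qed.

(* chi_of theta psi is the formula "exists v, theta(v) /\ psi(v, y)" in the
   parameter variables y of psi. *)
Definition rt m (i : nat) := if i is 0 then 0 else i + m.

Lemma chi_bound m mt (phit phip : formula L) :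
  fbound (1 + mt) phit -> fbound (1 + m) phip ->
  fbound (m + mt) (FEx (FAnd (frename (rt m) phit) phip)).
Proof.
move=> Ht Hp /=; split; first by apply: frename_bound Ht _ => -[|j] //= Hj; lia.
by apply: fbound_mono Hp _; lia.
Qed.

Definition chi_of (theta psi : lform M 1) : lform M (lf_m psi) :=
  LForm (par theta) (chi_bound (lf_bound theta) (lf_bound psi)).

Lemma satL_chi (theta psi : lform M 1) (yv : 'I_(lf_m psi) -> M) :
  satL yv (chi_of theta psi) <->
  exists a, satL (fun _ => a) theta /\ sat_par (lf_phi psi) yv (fun _ : 'I_1 => a).
Proof.
pose env := ext yv (ext (par theta) (fun _ => pt M)).
have Ea a : sat (scons a env) (FAnd (frename (rt (lf_m psi)) (lf_phi theta)) (lf_phi psi))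
    <-> satL (fun _ => a) theta /\ sat_par (lf_phi psi) yv (fun _ : 'I_1 => a).
  rewrite /= sat_rename /satL /sat_par.
  rewrite (sat_agree (e2 := ext (fun _ : 'I_1 => a) (ext (par theta) (fun _ => pt M)))
                     (lf_bound theta)); last first.
    move=> [|j] Hj /=; first by rewrite ext1_0.
    by rewrite ext1_S /env (ext_ge _ _ (leq_addl _ _)) addnK.
  rewrite (sat_agree (e2 := ext (fun _ : 'I_1 => a) (ext yv (fun _ => pt M)))
                     (lf_bound psi)) //.
  move=> [|j] Hj /=; first by rewrite ext1_0.
  by rewrite ext1_S /env; rewrite add1n ltnS in Hj; rewrite !(ext_lt _ _ Hj).
by split=> -[a Ha]; exists a; apply/Ea.
Qed.

(* A formula satisfied by an element algebraic over A does not divide over A: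
   conjugates psi(v, b_i) all meet the finite set defined by an algebraic
   formula theta, so infinitely many of them share a common solution. *)
Lemma acl_not_divides (A : M -> Prop) x (psi : lform M 1) :
  acl A x -> satL (fun _ => x) psi -> ~ divides A psi.
Proof.
move=> [theta [Hto Htx [s Hs]]] Hpx [k [bs [Hsame Hinc]]].
have Hi i : exists a, satL (fun _ => a) theta /\ sat_par (lf_phi psi) (bs i) (fun _ : 'I_1 => a).
  by apply/satL_chi; apply/(Hsame i) => //; apply/satL_chi; exists x.
have [ya Hya] : exists ya : nat -> M, forall i,
    satL (fun _ => ya i) theta /\ sat_par (lf_phi psi) (bs i) (fun _ : 'I_1 => ya i).
  exists (fun i => proj1_sig (constructive_indefinite_description _ (Hi i))) => i.
  by case: constructive_indefinite_description.
have [y Hy] := inf_pigeon (D := fun _ => True) (fun n => ex_intro _ n (conj (leqnn n) I))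
  (fun i _ => Hs _ (Hya i).1).
have Hinf n : exists i, n <= i /\ ya i = y by have [i [H1 _ H3]] := Hy n; exists i.
have [l [Hu Hsz Hl]] := inf_list Hinf k.
by apply: (Hinc l Hu Hsz); exists (fun _ => y) => i /Hl <-; exact: (Hya i).2.
Qed.

Lemma acl_tp_algebraic (A : M -> Prop) x :
  acl A x -> algebraic_type (tp A (fun _ : 'I_1 => x)).
Proof.
move=> [theta [Ho Hx [s Hs]]]; exists (map (fun y => fun _ : 'I_1 => y) s) => a Ha.
by rewrite (one_funE a); apply: List.in_map; apply: Hs; exact: Ha.
Qed.

Lemma acl_tp_nonforking (A B : M -> Prop) x :
  acl A x -> ~ forks A (tp B (fun _ : 'I_1 => x)).
Proof.
move=> Hax [l [Hdiv Hreal]]; have [psi [Hin Hps]] := Hreal (fun _ => x) (fun psi H => H.2).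
exact: acl_not_divides Hax Hps (Hdiv psi Hin).
Qed.

End Algebraic.

Section Extension.
Variables (L : lang) (M : structure L) (I : Type) (gT : finGroupType).
Variables (K K' : M -> Prop) (sigma sigma' : gT -> M -> M).
Hypotheses (Hmon : monster M I) (Hqe : QE M) (Hfs : FS M).
Hypotheses (HK : substructure K) (HsK : small I K) (HK' : substructure K') (HsK' : small I K').
Hypotheses (Hact : G_action K sigma) (Hact' : G_action K' sigma').
Hypotheses (HKK' : subs K K') (Hagree : forall g x, K x -> sigma' g x = sigma g x).
Hypothesis HKdcl : dcl_closed K.
Notation par psi := (@lf_par _ _ _ psi).

Lemma fixed_sub : subs (fixed K sigma) (fixed K' sigma').
Proof. by move=> z [Kz Hz]; split; [exact: HKK' | move=> g; rewrite Hagree]. Qed.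

Lemma tp_over_fixed_determines (x y : M) : dcl (fixed K' sigma') x ->
  same_tp (fixed K sigma) (fun _ : 'I_1 => x) (fun _ => y) ->
  same_tp K (fun _ : 'I_1 => x) (fun _ => y).
Proof.
move=> Hdx Hxy psi Hpo.
have HsF : small I (fixed K sigma) by apply: small_sub HsK _ => z [].
have [t [Ht HtF Htx]] := same_tp_conjugate Hmon HsF Hxy.
have [[g tg gt] _ _] := Ht.
have Hg : aut g := aut_inv Ht tg gt.
have HgF z : fixed K sigma z -> g z = z by move=> Hz; rewrite -{1}(HtF z Hz) tg.
(* g acts on the parameters of psi like sigma_h, i.e. like an automorphism
   extending sigma'_h, which fixes x *)
have [h Hh] := galois_conjugate Hmon Hqe Hfs HK HsK Hact HKdcl Hg HgF Hpo.
have [r [Hr HrK']] := aut_on_extend Hmon Hqe HK' HsK' (Hact'.1 h).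
have Hrx : r x = x by apply: (aut_fix_dcl Hr) Hdx => z [K'z Hz]; rewrite HrK'.
have Ey : g \o (fun _ : 'I_1 => y) = (fun _ => x).
  by apply: functional_extensionality => i /=; rewrite -Htx tg.
have Ex : r \o (fun _ : 'I_1 => x) = (fun _ => x).
  by apply: functional_extensionality => i /=; rewrite Hrx.
have Epar : g \o par psi = r \o par psi.
  by apply: functional_extensionality => j /=; rewrite Hh HrK' ?Hagree //; exact: HKK'.
by rewrite (aut_satL _ _ Hr) (aut_satL _ _ Hg) Ey Ex Epar.
Qed.

Lemma tp_unique_completion (x : M) (q : ltype M 1) : dcl (fixed K' sigma') x ->
  complete_type K q -> (forall psi, tp (fixed K sigma) (fun _ => x) psi -> q psi) ->
  same_types (tp K (fun _ => x)) q.
Proof.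
move=> Hdx Hq Hpq.
have [y Hy] : exists y, realizes q y.
  have [_ _ _ Hsat _] := Hmon; have [Ho Hf _] := Hq; exact: Hsat K 1 q HsK Ho Hf.
have HxyF : same_tp (fixed K sigma) (fun _ : 'I_1 => x) (fun _ => y ord0).
  by rewrite -one_funE; apply: same_tp_of_tp => chi /Hpq /Hy.
have HxyK := tp_over_fixed_determines Hdx HxyF.
apply: (complete_type_incl (tp_complete _ _) Hq) => psi [Ho Hx].
apply: (complete_type_realized Hq Hy Ho).
by rewrite (one_funE y); apply/(HxyK psi Ho).
Qed.

End Extension.

Theorem lemma3p9 (L : lang) (M : structure L) (I : Type)
  (gT : finGroupType)
  (K K' : M -> Prop) (sigma sigma' : gT -> M -> M) :
  monster M I -> QE M -> FS M ->
  substructure K -> small I K -> substructure K' -> small I K' ->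
  G_action K sigma -> G_action K' sigma' ->
  subs K K' -> (forall g x, K x -> sigma' g x = sigma g x) ->
  faithful K sigma -> dcl_closed K ->
  alg_strongly_PAC (fixed K sigma) K ->
  regular (fixed K sigma) (fixed K' sigma').
Proof.
move=> Hmon Hqe Hfs HK HsK HK' HsK' Hact Hact' HKK' Hagree _ HKdcl [HFdcl Hpac].
have HFF' := fixed_sub HKK' Hagree.
split=> // x; split; last first.
  by move=> Hx; split; [exact: (dcl_mono HFF' Hx) | exact: dcl_acl].
move=> [Hdx Hax]; apply/HFdcl; apply: tp_realized_self.
apply: Hpac (tp_complete _ _) (acl_tp_algebraic Hax) _.
exists (tp K (fun _ => x)); split.
- exact: tp_complete.
- by move=> psi; apply: tp_mono => z [].
- exact: acl_tp_nonforking.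
- move=> q Hq Hpq _.
  exact: (tp_unique_completion Hmon Hqe Hfs HK HsK HK' HsK' Hact Hact' HKK' Hagree HKdcl Hdx Hq Hpq).
Qed.
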